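(* There is an algorithm that, given integers $p,q\ge1$, decides whether there exist antipalindromic numbers $A,B$ with $p/q=A/B$.
   Context: A positive integer $n$ is antipalindromic if its binary representation $w=w_1\cdots w_L$ (most significant digit first, no leading zeros) has even length $L$ and satisfies $w_i+w_{L+1-i}=1$ for all $i$. *)

From mathcomp Require Import all_boot.
Set Implicit Arguments. Unset Strict Implicit. Unset Printing Implicit Defensive.

Definition bit (i n : nat) : nat := odd (n %/ 2 ^ i).

(* n is antipalindromic: its binary representation w_1..w_L (MSB first, no
   leading zeros) has even length L and w_i + w_{L+1-i} = 1.  With LSB-first
   indices j = L - i, the condition reads bit j n + bit (L-1-j) n = 1. *)
Definition antipalindromic (n : nat) : Prop :=
  exists L : nat, ~~ odd L /\ 2 ^ L.-1 <= n < 2 ^ L /\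
    forall j, j < L -> bit j n + bit (L.-1 - j) n = 1.

(* A model of computation: partial (mu-)recursive functions, used to state
   "there is an algorithm" without it being trivialized by classical axioms. *)
Inductive rec : Type :=
| RZero : rec
| RSucc : rec
| RProj : nat -> rec
| RComp : rec -> list rec -> rec
| RPrimRec : rec -> rec -> rec
| RMu : rec -> rec.

Inductive eval : rec -> seq nat -> nat -> Prop :=
| ev_zero xs : eval RZero xs 0
| ev_succ x xs : eval RSucc (x :: xs) x.+1
| ev_proj i xs : i < size xs -> eval (RProj i) xs (nth 0 xs i)
| ev_comp f gs xs ys y :
    evals gs xs ys -> eval f ys y -> eval (RComp f gs) xs y
| ev_pr0 f g xs y : eval f xs y -> eval (RPrimRec f g) (0 :: xs) y
| ev_prS f g n xs r y :
    eval (RPrimRec f g) (n :: xs) r -> eval g (n :: r :: xs) y ->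
    eval (RPrimRec f g) (n.+1 :: xs) y
| ev_mu f xs n :
    eval f (n :: xs) 0 ->
    (forall m, m < n -> exists k, 0 < k /\ eval f (m :: xs) k) ->
    eval (RMu f) xs n
with evals : list rec -> seq nat -> seq nat -> Prop :=
| evs_nil xs : evals nil xs nil
| evs_cons g gs xs y ys :
    eval g xs y -> evals gs xs ys -> evals (g :: gs) xs (y :: ys).

From Stdlib Require Import ZArith Lia.
From mathcomp Require Import all_boot zify.
Set Implicit Arguments. Unset Strict Implicit. Unset Printing Implicit Defensive.

(* Read an antipalindromic number of length 2m as a word u of length m followed
   by its reversed complement. If p * A(u) = q * A(w) with |u| <= |w|, compare
   the two sides bit by bit from both ends at once: after i steps, all that the
   rest of the comparison needs is a carry coming from the low end and an excess
   coming from the high end, and both are bounded in terms of p and q. When |u|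
   exceeds the number (p + q)(q + 4p) of such states, two positions i < j have
   the same state, and deleting positions i..j-1 from both u and w leaves a
   smaller solution. As moreover q * 4^(|w| - |u|) < 2p, a solution exists iff
   one exists below an explicit bound in p and q, so a bounded search, written
   as a primitive recursive program, decides the question. *)

(** * Binary words *)

Fixpoint nat_of_bits (s : seq bool) : nat :=
  if s is b :: s' then b + 2 * nat_of_bits s' else 0.

Lemma nat_of_bits_cat s t :
  nat_of_bits (s ++ t) = nat_of_bits s + 2 ^ size s * nat_of_bits t.
Proof. by elim: s => [|b s IHs] /=; rewrite ?mul1n ?add0n // IHs expnS; lia. Qed.

Lemma nat_of_bits_lt s : nat_of_bits s < 2 ^ size s.
Proof. by elim: s => [|b s IHs] //=; rewrite expnS; case: b => /=; lia. Qed.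

Lemma nat_of_bits_ge s : last false s -> 2 ^ (size s).-1 <= nat_of_bits s.
Proof.
elim: s => [|b [|c s] IHs] //=; first by case: b.
by move=> /IHs /=; rewrite expnS; lia.
Qed.

Lemma bit_nat_of_bits s j : bit j (nat_of_bits s) = nth false s j.
Proof.
rewrite /bit; elim: s j => [|b s IHs] [|j] /=; rewrite ?div0n ?nth_nil //.
  by rewrite divn1 oddD oddM /= addbF; case: b.
rewrite expnS mulnC divnMA -IHs; congr (nat_of_bool (odd (_ %/ _))).
by rewrite divnDMl //; case: b.
Qed.

Fixpoint bits_of (L n : nat) : seq bool :=
  if L is L'.+1 then odd n :: bits_of L' n./2 else [::].

Lemma size_bits_of L n : size (bits_of L n) = L.
Proof. by elim: L n => //= L IHL n; rewrite IHL. Qed.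

Lemma bits_ofK L n : n < 2 ^ L -> nat_of_bits (bits_of L n) = n.
Proof.
elim: L n => [|L IHL] n /=; first by rewrite expn0 ltnS leqn0 => /eqP ->.
move=> n_lt; rewrite IHL; last by rewrite -divn2 ltn_divLR // -expnSr.
by rewrite -[in RHS](odd_double_half n) -muln2 mulnC.
Qed.

Definition comprev (s : seq bool) : seq bool := map negb (rev s).

Lemma size_comprev s : size (comprev s) = size s.
Proof. by rewrite size_map size_rev. Qed.

Lemma comprev_cat s t : comprev (s ++ t) = comprev t ++ comprev s.
Proof. by rewrite /comprev rev_cat map_cat. Qed.

Lemma comprevK : involutive comprev.
Proof.
move=> s; rewrite /comprev -map_rev revK -map_comp map_id_in // => b _ /=.
exact: negbK.
Qed.

Lemma nth_comprev s j : j < size s ->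
  nth false (comprev s) j = ~~ nth false s ((size s).-1 - j).
Proof.
move=> lt_j; rewrite (nth_map false) ?size_rev // nth_rev //.
by congr (~~ nth _ _ _); lia.
Qed.

(* Words are little-endian. The antipalindromic numbers of length 2m are the
   [nat_of_bits (antipal u)] with [size u = m] and [low_half u]: the top bit of
   [antipal u] is the complement of the head of [u]. *)
Definition antipal (u : seq bool) : seq bool := u ++ comprev u.

Definition low_half (u : seq bool) : bool := ~~ head true u.

Lemma size_antipal u : size (antipal u) = (size u).*2.
Proof. by rewrite size_cat size_comprev addnn. Qed.

Lemma comprev_antipal u : comprev (antipal u) = antipal u.
Proof. by rewrite comprev_cat comprevK. Qed.

Lemma antipal_cat s t : antipal (s ++ t) = s ++ antipal t ++ comprev s.
Proof. by rewrite /antipal comprev_cat !catA. Qed.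

Lemma last_antipal u : low_half u -> last false (antipal u).
Proof. by case: u => [|b u] //= b0; rewrite last_cat /comprev rev_cons map_rcons last_rcons. Qed.

Lemma antipal_take_half s : ~~ odd (size s) ->
    (forall j, j < size s -> nth false s ((size s).-1 - j) = ~~ nth false s j) ->
  antipal (take (size s)./2 s) = s.
Proof.
move=> even_s mirror_s; set k := (size s)./2.
have size_s : size s = k.*2 by rewrite -[LHS]odd_double_half (negbTE even_s).
have size_take_k : size (take k s) = k by rewrite size_takel // size_s -addnn leq_addr.
apply: (@eq_from_nth _ false) => [|j]; first by rewrite size_antipal size_take_k.
rewrite size_antipal size_take_k => lt_j; rewrite nth_cat size_take_k.
case: ltnP => [lt_jk | le_kj]; first by rewrite nth_take.
rewrite nth_comprev size_take_k; last by lia.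
rewrite nth_take; last by lia.
by rewrite -mirror_s ?size_s; [congr nth; lia | lia].
Qed.

Lemma antipalindromic_antipal u :
  low_half u -> antipalindromic (nat_of_bits (antipal u)).
Proof.
move=> low_u; exists (size u).*2; rewrite odd_double -size_antipal.
split=> //; split.
  by rewrite nat_of_bits_lt andbT nat_of_bits_ge ?last_antipal.
move=> j lt_j; rewrite !bit_nat_of_bits -[X in nth _ X (_ - j)]comprev_antipal.
rewrite nth_comprev; last by lia.
have -> : (size (antipal u)).-1 - ((size (antipal u)).-1 - j) = j by lia.
by case: nth.
Qed.

Lemma antipalindromic_low_half n :
  antipalindromic n -> exists2 u, low_half u & n = nat_of_bits (antipal u).
Proof.
move=> [L [even_L [/andP [ge_n lt_n] mirror_n]]].
set s := bits_of L n.
have n_s : n = nat_of_bits s by rewrite bits_ofK.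
have size_s : size s = L := size_bits_of L n.
have bit_s j : bit j n = nth false s j by rewrite n_s bit_nat_of_bits.
have L_gt0 : 0 < L by case: L ge_n lt_n {even_L mirror_n s n_s size_s bit_s}; lia.
have mirror_s j : j < size s -> nth false s ((size s).-1 - j) = ~~ nth false s j.
  by rewrite size_s => /mirror_n; rewrite !bit_s; case: nth; case: nth.
have top_s : nth false s L.-1.
  have := bit_s L.-1; rewrite /bit; suff -> : n %/ 2 ^ L.-1 = 1 by case: nth.
  apply/eqP; rewrite eqn_leq -ltnS ltn_divLR ?expn_gt0 // leq_divRL ?expn_gt0 //.
  by rewrite mul1n ge_n andbT -expnS prednK.
exists (take (size s)./2 s); last by rewrite antipal_take_half // size_s.
have L_gt1 : 1 < L by move: (even_L) (L_gt0); case: (L) => [|[|]].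
rewrite /low_half -nth0 nth_take; last by rewrite size_s -divn2 divn_gt0.
rewrite (set_nth_default false) ?size_s //.
by have := mirror_n 0 L_gt0; rewrite subn0 !bit_s top_s; case: nth.
Qed.

(** * Pumping *)

Definition low_bits (s : seq bool) i := nat_of_bits (take i s).
Definition mid_bits (s : seq bool) i := nat_of_bits (antipal (drop i s)).
Definition high_bits (s : seq bool) i := nat_of_bits (comprev (take i s)).

Lemma nat_of_bits_antipal_cat s t :
  nat_of_bits (antipal (s ++ t)) = nat_of_bits s + 2 ^ size s * nat_of_bits (antipal t)
    + 2 ^ size s * 2 ^ (size t).*2 * nat_of_bits (comprev s).
Proof. by rewrite antipal_cat !nat_of_bits_cat size_antipal; lia. Qed.

Lemma nat_of_bits_antipal_split s i : i <= size s ->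
  nat_of_bits (antipal s) =
    low_bits s i + 2 ^ i * mid_bits s i + 2 ^ i * 2 ^ (size s - i).*2 * high_bits s i.
Proof.
by move=> le_i; rewrite -{1}(cat_take_drop i s) nat_of_bits_antipal_cat size_takel // size_drop.
Qed.

Lemma low_bits_lt s i : low_bits s i < 2 ^ i.
Proof.
apply: leq_trans (nat_of_bits_lt _) _; rewrite leq_exp2l // size_take.
by case: ltnP => // /ltnW.
Qed.

Lemma mid_bits_lt s i : mid_bits s i < 2 ^ (size s - i).*2.
Proof. by have := nat_of_bits_lt (antipal (drop i s)); rewrite size_antipal size_drop. Qed.

Lemma exp2_double_sub m n k : k <= m <= n ->
  2 ^ (n - k).*2 = 2 ^ (m - k).*2 * 2 ^ (n - m).*2.
Proof. by move=> /andP [le_km le_mn]; rewrite -expnD -doubleD; congr (2 ^ _.*2); lia. Qed.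

Lemma pigeonhole (T : eqType) (f : nat -> T) (r : seq T) n :
    size r <= n -> (forall i, i <= n -> f i \in r) ->
  exists i j, i < j <= n /\ f i = f j.
Proof.
move=> size_r f_r; set s := map f (iota 0 n.+1).
have /uniqPn : ~~ uniq s.
  apply/negP => uniq_s; suff : size s <= size r by rewrite size_map size_iota; lia.
  apply: uniq_leq_size => // x /mapP [i]; rewrite mem_iota => /andP [_ le_i] ->.
  exact: f_r.
move=> /(_ (f 0)) [i [j [lt_ij]]]; rewrite size_map size_iota => lt_j.
rewrite !(nth_map 0) ?size_iota ?(ltn_trans lt_ij) // !nth_iota ?(ltn_trans lt_ij) //.
by exists i, j; rewrite lt_ij -ltnS.
Qed.

Definition state_count p q := (p + q) * (q + 4 * p).

Local Coercion Z.of_nat : nat >-> Z.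

Section Pumping.

Variables (p q : nat) (u w : seq bool).
Hypotheses (p_gt0 : 0 < p) (q_gt0 : 0 < q) (size_uw : size u <= size w).
Hypothesis low_w : low_half w.
Hypothesis solution_uw : p * nat_of_bits (antipal u) = q * nat_of_bits (antipal w).

Local Open Scope Z_scope.

Let gap := (size w - size u)%N.

(* By [low_diff_carry], [carry i] is (p * low_bits u i - q * low_bits w i) / 2^i,
   so [carry i] and [excess i] only depend on the first [i] bits of [u] and [w]:
   they form the state of an automaton reading both words from both ends at
   once, and since they are bounded two positions share the same state. *)
Definition excess i : Z := q * high_bits w i * (2 ^ gap.*2)%N - p * high_bits u i.
Definition carry i : Z :=
  (2 ^ (size u - i).*2)%N * excess i - (p * mid_bits u i - q * mid_bits w i).

Lemma low_diff_carry i : (i <= size u)%N ->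
  p * low_bits u i - q * low_bits w i = (2 ^ i)%N * carry i.
Proof.
move=> le_i; move: solution_uw.
rewrite (nat_of_bits_antipal_split le_i) (nat_of_bits_antipal_split (leq_trans le_i size_uw)).
rewrite (@exp2_double_sub (size u) (size w) i) ?le_i ?size_uw // /carry /excess.
set a1 := low_bits u i; set a2 := low_bits w i; set m1 := mid_bits u i.
set m2 := mid_bits w i; set h1 := high_bits u i; set h2 := high_bits w i.
set P := (2 ^ i)%N; set Q := (2 ^ _)%N; set D := (2 ^ gap.*2)%N.
clearbody a1 a2 m1 m2 h1 h2 P Q D; lia.
Qed.

Lemma carry_bounds i : (i <= size u)%N -> - q < carry i < p.
Proof.
move=> le_i; have := low_diff_carry le_i.
have := low_bits_lt u i; have := low_bits_lt w i; have : (0 < 2 ^ i)%N by rewrite expn_gt0.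
set a1 := low_bits u i; set a2 := low_bits w i; set P := (2 ^ i)%N; set C := carry i.
clearbody a1 a2 P C; nia.
Qed.

Lemma gap_bound : (q * 2 ^ gap.*2 < 2 * p)%N.
Proof.
have ge_w := nat_of_bits_ge (last_antipal low_w); have lt_u := nat_of_bits_lt (antipal u).
rewrite !size_antipal in ge_w lt_u.
have w_double : (2 ^ (size w).*2 = 2 * 2 ^ (size w).*2.-1)%N.
  by rewrite -expnS prednK // double_gt0; case: (w) low_w.
have w_split : (2 ^ (size w).*2 = 2 ^ (size u).*2 * 2 ^ gap.*2)%N.
  by rewrite -expnD -doubleD subnKC.
move: w_double w_split ge_w lt_u solution_uw.
set X := (2 ^ (size u).*2)%N; set D := (2 ^ gap.*2)%N; set H := (2 ^ _.-1)%N.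
set A := nat_of_bits (antipal w); set B := nat_of_bits (antipal u).
clearbody X D H A B => w_double w_split ge_w lt_u sol.
have : (q * (X * D) <= 2 * p * B)%N.
  by rewrite -w_split w_double mulnCA -mulnA sol leq_pmul2l // leq_mul.
have : (2 * p * B < 2 * p * X)%N by rewrite ltn_pmul2l //; lia.
nia.
Qed.

Lemma excess_bounds i : (i <= size u)%N -> - q - 2 * p < excess i < 2 * p.
Proof.
move=> le_i; have [C_lo C_hi] := carry_bounds le_i; have gapB := gap_bound.
have M1 := mid_bits_lt u i; have M2 := mid_bits_lt w i.
rewrite (@exp2_double_sub (size u) (size w) i) ?le_i ?size_uw // in M2.
have Q_gt0 : (0 < 2 ^ (size u - i).*2)%N by rewrite expn_gt0.
move: C_lo C_hi gapB M1 M2 Q_gt0; rewrite /carry.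
set Y := excess i; set Q := (2 ^ (size u - i).*2)%N; set D := (2 ^ gap.*2)%N.
set m1 := mid_bits u i; set m2 := mid_bits w i.
clearbody Y Q D m1 m2 => C_lo C_hi gapB M1 M2 Q_gt0.
have : (Q * (q * D) <= Q * (2 * p - 1))%N by rewrite leq_pmul2l //; lia.
split; nia.
Qed.

Lemma cut_solution i j : (i < j <= size u)%N -> carry i = carry j -> excess i = excess j ->
  (p * nat_of_bits (antipal (take i u ++ drop j u))
   = q * nat_of_bits (antipal (take i w ++ drop j w)))%N.
Proof.
move=> /andP [lt_ij le_j] carry_ij excess_ij.
have le_i : (i <= size u)%N by lia.
have := low_diff_carry le_i; rewrite carry_ij /carry -excess_ij /excess.
rewrite !nat_of_bits_antipal_cat !size_takel ?(leq_trans le_i size_uw) // !size_drop.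
rewrite (@exp2_double_sub (size u) (size w) j) ?le_j ?size_uw //.
rewrite /low_bits /mid_bits /high_bits.
set a1 := nat_of_bits (take i u); set a2 := nat_of_bits (take i w).
set m1 := nat_of_bits (antipal (drop j u)); set m2 := nat_of_bits (antipal (drop j w)).
set h1 := nat_of_bits (comprev (take i u)); set h2 := nat_of_bits (comprev (take i w)).
set P := (2 ^ i)%N; set Q := (2 ^ (size u - j).*2)%N; set D := (2 ^ gap.*2)%N.
clearbody a1 a2 m1 m2 h1 h2 P Q D; lia.
Qed.

Lemma repeated_state : (state_count p q < size u)%N ->
  exists i j, [/\ (0 < i)%N, (i < j <= size u)%N, carry i = carry j & excess i = excess j].
Proof.
move=> large_u.
pose code k := (Z.to_nat (carry k.+1 + q), Z.to_nat (excess k.+1 + (q + 2 * p)%N)).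
set codes := [seq (a, b) | a <- iota 0 (p + q), b <- iota 0 (q + 4 * p)].
have size_codes : (size codes <= state_count p q)%N by rewrite size_allpairs !size_iota.
have code_in k : (k <= state_count p q)%N -> code k \in codes.
  move=> le_k; have le_k1 : (k.+1 <= size u)%N by lia.
  have [c_lo c_hi] := carry_bounds le_k1; have [e_lo e_hi] := excess_bounds le_k1.
  by apply/allpairsP; exists (code k); rewrite /code !mem_iota /=; split=> //; lia.
have [i [j [/andP [lt_ij le_j] [code_ij1 code_ij2]]]] := pigeonhole size_codes code_in.
have le_i1 : (i.+1 <= size u)%N by lia.
have le_j1 : (j.+1 <= size u)%N by lia.
have [ci_lo ci_hi] := carry_bounds le_i1; have [ei_lo ei_hi] := excess_bounds le_i1.
have [cj_lo cj_hi] := carry_bounds le_j1; have [ej_lo ej_hi] := excess_bounds le_j1.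
by exists i.+1, j.+1; split; lia.
Qed.

End Pumping.

Lemma low_half_cut (u : seq bool) i j : 0 < i <= size u -> low_half u ->
  low_half (take i u ++ drop j u).
Proof. by case: u i => [|b u] [|i]. Qed.

Lemma shorten_solution p q u w : 0 < p -> 0 < q ->
    size u <= size w -> low_half u -> low_half w ->
    p * nat_of_bits (antipal u) = q * nat_of_bits (antipal w) ->
  exists u' w', [/\ low_half u', low_half w', size u' <= state_count p q,
    size u' <= size w' & p * nat_of_bits (antipal u') = q * nat_of_bits (antipal w')].
Proof.
move=> p_gt0 q_gt0; have [n] := ubnP (size u); elim: n u w => // n IHn u w.
rewrite ltnS => le_un size_uw low_u low_w sol.
have [small_u | large_u] := leqP (size u) (state_count p q); first by exists u, w.
have [i [j [i_gt0 /andP [lt_ij le_j] carry_ij excess_ij]]] :=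
  repeated_state p_gt0 q_gt0 size_uw low_w sol large_u.
have le_jw : j <= size w by lia.
apply: (IHn (take i u ++ drop j u) (take i w ++ drop j w)).
- by rewrite size_cat size_takel ?size_drop; lia.
- by rewrite !size_cat !size_takel ?size_drop; lia.
- by apply: low_half_cut => //; lia.
- by apply: low_half_cut => //; lia.
- by apply: cut_solution; rewrite ?lt_ij.
Qed.

Definition length_bound p q := state_count p q + state_count q p + p + q.

Lemma length_boundC p q : length_bound p q = length_bound q p.
Proof. by rewrite /length_bound; lia. Qed.

Lemma small_solution p q u w : 0 < p -> 0 < q ->
    size u <= size w -> low_half u -> low_half w ->
    p * nat_of_bits (antipal u) = q * nat_of_bits (antipal w) ->
  exists u' w', [/\ low_half u', low_half w', size u' <= length_bound p q,
    size w' <= length_bound p q & p * nat_of_bits (antipal u') = q * nat_of_bits (antipal w')].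
Proof.
move=> p_gt0 q_gt0 size_uw low_u low_w sol.
have [u' [w' [low_u' low_w' small_u' size_uw' sol']]] :=
  shorten_solution p_gt0 q_gt0 size_uw low_u low_w sol.
have gap_lt := gap_bound p_gt0 q_gt0 size_uw' low_w' sol'.
have := ltn_expl (size w' - size u').*2 (isT : 1 < 2).
have := leq_pmull (2 ^ (size w' - size u').*2) q_gt0.
by exists u', w'; split; rewrite // /length_bound; lia.
Qed.

Definition search_bound p q := 2 ^ (length_bound p q).*2.

Lemma antipal_lt_search_bound p q u : size u <= length_bound p q ->
  nat_of_bits (antipal u) < search_bound p q.
Proof.
move=> le_u; apply: leq_trans (nat_of_bits_lt _) _.
by rewrite size_antipal leq_exp2l // leq_double.
Qed.

Lemma antipal_ratio_bounded p q : 0 < p -> 0 < q ->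
    (exists A B, antipalindromic A /\ antipalindromic B /\ p * B = q * A) ->
  exists A B, [/\ A < search_bound p q, B < search_bound p q,
    antipalindromic A, antipalindromic B & p * B = q * A].
Proof.
move=> p_gt0 q_gt0 [A [B [/antipalindromic_low_half [w low_w ->]]]].
move=> [/antipalindromic_low_half [u low_u ->] sol].
have [size_uw | size_wu] := leqP (size u) (size w).
  have [u' [w' [low_u' low_w' small_u' small_w' sol']]] :=
    small_solution p_gt0 q_gt0 size_uw low_u low_w sol.
  exists (nat_of_bits (antipal w')), (nat_of_bits (antipal u')).
  by split=> //; first [exact: antipal_lt_search_bound | exact: antipalindromic_antipal].
have [w' [u' [low_w' low_u' small_w' small_u' sol']]] :=
  small_solution q_gt0 p_gt0 (ltnW size_wu) low_w low_u (esym sol).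
rewrite length_boundC in small_w' small_u'.
exists (nat_of_bits (antipal w')), (nat_of_bits (antipal u')).
by split=> //; first [exact: antipal_lt_search_bound | exact: antipalindromic_antipal].
Qed.

(** * Programs *)

Definition computes (f : rec) (xs : seq nat) (y : nat) : Prop :=
  forall z, eval f xs z <-> z = y.

Definition computes_all (gs : list rec) (xs ys : seq nat) : Prop :=
  forall zs, evals gs xs zs <-> zs = ys.

Lemma computes_zero xs : computes RZero xs 0.
Proof. by move=> z; split=> [H | ->]; [inversion H | constructor]. Qed.

Lemma computes_succ x xs : computes RSucc (x :: xs) x.+1.
Proof. by move=> z; split=> [H | ->]; [inversion H | constructor]. Qed.

Lemma computes_proj i xs : i < size xs -> computes (RProj i) xs (nth 0 xs i).
Proof. by move=> lt_i z; split=> [H | ->]; [inversion H | constructor]. Qed.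

Lemma computes_all_nil xs : computes_all nil xs nil.
Proof. by move=> zs; split=> [H | ->]; [inversion H | constructor]. Qed.

Lemma computes_all_cons g gs xs y ys :
  computes g xs y -> computes_all gs xs ys -> computes_all (g :: gs) xs (y :: ys).
Proof.
move=> Hg Hgs zs; split=> [H | ->].
  by inversion H; subst; congr cons; [apply/Hg | apply/Hgs].
by constructor; [apply/Hg | apply/Hgs].
Qed.

Lemma computes_comp f gs xs ys y :
  computes_all gs xs ys -> computes f ys y -> computes (RComp f gs) xs y.
Proof.
move=> Hgs Hf z; split=> [H | ->].
  inversion H as [| | | ? ? ? zs ? Hzs Hf_zs | | |]; subst.
  by move/Hgs: Hzs Hf_zs => -> /Hf.
by econstructor; [apply/Hgs | apply/Hf].
Qed.

Lemma computes_primrec f g xs a (h : nat -> nat -> nat) n :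
  computes f xs a -> (forall m r, computes g [:: m, r & xs] (h m r)) ->
  computes (RPrimRec f g) (n :: xs) (iteri n h a).
Proof.
move=> Hf Hg; elim: n => [|n IHn] z /=; split=> [H | ->].
- by inversion H; apply/Hf.
- by constructor; apply/Hf.
- inversion H as [| | | | | ? ? ? ? r ? Hr Hgr |]; subst.
  by move/IHn: Hr Hgr => -> /Hg.
- by econstructor; [apply/IHn | apply/Hg].
Qed.

Lemma computes_all_proj xs :
  computes_all (map RProj (iota 0 (size xs))) xs xs.
Proof.
suff H t s : s + t <= size xs ->
    computes_all (map RProj (iota s t)) xs (map (nth 0 xs) (iota s t)).
  by rewrite -[X in computes_all _ _ X](mkseq_nth 0 xs); apply: H.
elim: t s => [|t IHt] s st_le /=; first exact: computes_all_nil.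
apply: computes_all_cons; first by apply: computes_proj; lia.
by apply: IHt; lia.
Qed.

Inductive expr : Type :=
| EVar of nat
| EZero
| ESucc of expr
| EPR of expr & expr & expr
| EApp1 of expr & expr
| EApp2 of expr & expr & expr.

(* Inside the step [eS] of [EPR e0 eS en], variable 0 is the counter, variable 1
   the accumulator, and the outer variables are shifted by two. *)
Fixpoint denote (e : expr) (xs : seq nat) : nat :=
  match e with
  | EVar i => nth 0 xs i
  | EZero => 0
  | ESucc e => (denote e xs).+1
  | EPR e0 eS en =>
      iteri (denote en xs) (fun n r => denote eS [:: n, r & xs]) (denote e0 xs)
  | EApp1 f e1 => denote f [:: denote e1 xs]
  | EApp2 f e1 e2 => denote f [:: denote e1 xs; denote e2 xs]
  end.

Fixpoint compile (k : nat) (e : expr) : rec :=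
  match e with
  | EVar i => if i < k then RProj i else RZero
  | EZero => RZero
  | ESucc e => RComp RSucc [:: compile k e]
  | EPR e0 eS en =>
      RComp (RPrimRec (compile k e0) (compile k.+2 eS))
            (compile k en :: map RProj (iota 0 k))
  | EApp1 f e1 => RComp (compile 1 f) [:: compile k e1]
  | EApp2 f e1 e2 => RComp (compile 2 f) [:: compile k e1; compile k e2]
  end.

Lemma compile_computes e xs : computes (compile (size xs) e) xs (denote e xs).
Proof.
elim: e xs => [i||e IHe|e0 IH0 eS IHS en IHn|f IHf e1 IH1|f IHf e1 IH1 e2 IH2] xs /=.
- case: ltnP => [/computes_proj // | ge_i].
  by rewrite nth_default //; apply: computes_zero.
- exact: computes_zero.
- apply: computes_comp (computes_succ _ _).
  exact: computes_all_cons (IHe xs) (computes_all_nil _).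
- apply: computes_comp; first exact: computes_all_cons (IHn xs) (computes_all_proj xs).
  by apply: computes_primrec => [|m r]; [apply: IH0 | apply: (IHS [:: m, r & xs])].
- apply: computes_comp (IHf [:: _]).
  exact: computes_all_cons (IH1 xs) (computes_all_nil _).
- apply: computes_comp (IHf [:: _; _]).
  exact: computes_all_cons (IH1 xs) (computes_all_cons (IH2 xs) (computes_all_nil _)).
Qed.

Definition enat (n : nat) := iter n ESucc EZero.
Lemma denote_enat n xs : denote (enat n) xs = n.
Proof. by elim: n => //= n ->. Qed.

Definition eadd := EPR (EVar 1) (ESucc (EVar 1)) (EVar 0).
Lemma denote_add a b : denote eadd [:: a; b] = a + b.
Proof. by elim: a => //= a ->. Qed.
Opaque eadd.

Definition emul := EPR EZero (EApp2 eadd (EVar 1) (EVar 3)) (EVar 0).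
Lemma denote_mul a b : denote emul [:: a; b] = a * b.
Proof. by elim: a => //= a ->; rewrite denote_add mulSn addnC. Qed.
Opaque emul.

Definition epred := EPR EZero (EVar 0) (EVar 0).
Lemma denote_pred a : denote epred [:: a] = a.-1.
Proof. by case: a. Qed.
Opaque epred.

Definition esub := EPR (EVar 0) (EApp1 epred (EVar 1)) (EVar 1).
Lemma denote_sub a b : denote esub [:: a; b] = a - b.
Proof. by elim: b => /= [|b ->]; rewrite ?subn0 // denote_pred subnS. Qed.
Opaque esub.

Definition ele := EApp2 esub (enat 1) (EApp2 esub (EVar 0) (EVar 1)).
Lemma denote_le a b : denote ele [:: a; b] = (a <= b).
Proof. by rewrite /= !denote_sub; case: leqP; lia. Qed.
Opaque ele.

Definition eeq := EApp2 emul (EApp2 ele (EVar 0) (EVar 1)) (EApp2 ele (EVar 1) (EVar 0)).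
Lemma denote_eq a b : denote eeq [:: a; b] = (a == b).
Proof. by rewrite /= !denote_le denote_mul mulnb eqn_leq. Qed.
Opaque eeq.

Definition epow2 := EPR (enat 1) (EApp2 eadd (EVar 1) (EVar 1)) (EVar 0).
Lemma denote_pow2 a : denote epow2 [:: a] = 2 ^ a.
Proof. by elim: a => //= a ->; rewrite denote_add expnS mul2n addnn. Qed.
Opaque epow2.

Definition eodd := EPR EZero (EApp2 esub (enat 1) (EVar 1)) (EVar 0).
Lemma denote_odd a : denote eodd [:: a] = odd a.
Proof. by elim: a => //= a ->; rewrite denote_sub; case: odd. Qed.
Opaque eodd.

Definition ehalf := EPR EZero (EApp2 eadd (EVar 1) (EApp1 eodd (EVar 0))) (EVar 0).
Lemma denote_half a : denote ehalf [:: a] = a./2.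
Proof. by elim: a => //= a ->; rewrite denote_add denote_odd uphalf_half addnC. Qed.
Opaque ehalf.

Definition ebit := EApp1 eodd (EPR (EVar 1) (EApp1 ehalf (EVar 1)) (EVar 0)).
Lemma denote_bit j n : denote ebit [:: j; n] = bit j n.
Proof.
rewrite /= denote_odd /bit; congr (nat_of_bool (odd _)).
elim: j => /= [|j ->]; first by rewrite divn1.
by rewrite denote_half -divn2 -divnMA expnSr.
Qed.
Opaque ebit.

Definition esum (body bnd : expr) := EPR EZero (EApp2 eadd (EVar 1) body) bnd.

Lemma denote_esum (F : nat -> nat) body bnd xs :
    (forall i r, denote body [:: i, r & xs] = F i) ->
  denote (esum body bnd) xs = \sum_(i < denote bnd xs) F i.
Proof.
move=> body_F /=; elim: (denote bnd xs) => [|N IHN] /=; first by rewrite big_ord0.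
by rewrite denote_add IHN body_F big_ord_recr.
Qed.
Opaque esum.

Definition eexists (body bnd : expr) := EApp2 ele (enat 1) (esum body bnd).

Lemma denote_eexists (P : nat -> bool) body bnd xs :
    (forall i r, denote body [:: i, r & xs] = P i) ->
  denote (eexists body bnd) xs = [exists i : 'I_(denote bnd xs), P i].
Proof.
move=> body_P; rewrite /= denote_le (denote_esum _ body_P) lt0n sum_nat_eq0 negb_forall.
by congr nat_of_bool; apply: eq_existsb => i; case: (P i).
Qed.
Opaque eexists.

Definition eforall (body bnd : expr) := EApp2 eeq (esum body bnd) bnd.

Lemma denote_eforall (P : nat -> bool) body bnd xs :
    (forall i r, denote body [:: i, r & xs] = P i) ->
  denote (eforall body bnd) xs = [forall i : 'I_(denote bnd xs), P i].
Proof.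
move=> body_P; rewrite /= denote_eq (denote_esum _ body_P).
congr nat_of_bool; set N := denote bnd xs.
have sum_split : \sum_(i < N) P i + \sum_(i < N) ~~ P i = N.
  by rewrite -big_split -[RHS]card_ord -sum1_card; apply: eq_bigr => i _; case: (P i).
apply/eqP/forallP => [sum_N i | allP].
  have /eqP : \sum_(i < N) ~~ P i = 0 by lia.
  by rewrite sum_nat_eq0 => /forallP/(_ i); case: (P i).
suff : \sum_(i < N) ~~ P i = 0 by lia.
by apply/eqP; rewrite sum_nat_eq0; apply/forallP => i; rewrite allP.
Qed.
Opaque eforall.

(** * The decision procedure *)

Definition antipalindromicb (n : nat) : bool :=
  [exists L : 'I_n.+1, [&& ~~ odd L, 2 ^ L.-1 <= n, n < 2 ^ L &
     [forall j : 'I_L, bit j n + bit (L.-1 - j) n == 1]]].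

Lemma antipalindromicP n : reflect (antipalindromic n) (antipalindromicb n).
Proof.
apply: (iffP existsP) => [[[L /= _] /and4P [even_L ge_n lt_n /forallP mirror_n]] | ].
  exists L; split=> //; split; first by rewrite ge_n.
  by move=> j lt_j; apply/eqP; apply: (mirror_n (Ordinal lt_j)).
move=> [L [even_L [/andP [ge_n lt_n] mirror_n]]].
have lt_L : L < n.+1.
  case: L ge_n {even_L lt_n mirror_n} => //= L ge_n.
  by rewrite ltnS; apply: leq_trans (ltn_expl L (isT : 1 < 2)) ge_n.
exists (Ordinal lt_L); rewrite /= even_L ge_n lt_n /=.
by apply/forallP => j; apply/eqP/mirror_n.
Qed.

Lemma antipal_ratio_searchP p q : 0 < p -> 0 < q ->
  reflect (exists A B, antipalindromic A /\ antipalindromic B /\ p * B = q * A)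
    [exists A : 'I_(search_bound p q), exists B : 'I_(search_bound p q),
       [&& antipalindromicb A, antipalindromicb B & p * B == q * A]].
Proof.
move=> p_gt0 q_gt0; apply: (iffP idP).
  move=> /existsP [A /existsP [B /and3P [/antipalindromicP antiA]]].
  by move=> /antipalindromicP antiB /eqP sol; exists A, B.
move=> /(antipal_ratio_bounded p_gt0 q_gt0) [A [B [lt_A lt_B antiA antiB sol]]].
apply/existsP; exists (Ordinal lt_A); apply/existsP; exists (Ordinal lt_B).
by rewrite /= sol eqxx andbT; apply/andP; split; apply/antipalindromicP.
Qed.

Definition eand (a b : expr) := EApp2 emul a b.

Definition eantipalindromic :=
  let L := EVar 0 in let n := EVar 2 in
  let mirror := let j := EVar 0 in let L := EVar 2 in let n := EVar 4 in
    EApp2 eeq (EApp2 eadd (EApp2 ebit j n) (EApp2 ebit (EApp2 esub (EApp1 epred L) j) n))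
      (enat 1) in
  eexists (eand (eand (eand (EApp2 esub (enat 1) (EApp1 eodd L))
      (EApp2 ele (EApp1 epow2 (EApp1 epred L)) n))
      (EApp2 ele (ESucc n) (EApp1 epow2 L)))
      (eforall mirror L))
    (ESucc (EVar 0)).

Lemma denote_antipalindromic n : denote eantipalindromic [:: n] = antipalindromicb n.
Proof.
rewrite (@denote_eexists (fun L => [&& ~~ odd L, 2 ^ L.-1 <= n, n < 2 ^ L &
     [forall j : 'I_L, bit j n + bit (L.-1 - j) n == 1]])) // => L r.
rewrite /= !denote_mul denote_sub denote_odd !denote_le !denote_pow2 denote_pred.
rewrite (@denote_eforall (fun j => bit j n + bit (L.-1 - j) n == 1)) => [|j r'].
  by case: odd; case: (2 ^ L.-1 <= n); case: (n < 2 ^ L); case: [forall _, _].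
by rewrite /= denote_eq denote_add !denote_bit denote_sub denote_pred.
Qed.
Opaque eantipalindromic.

Definition estate_count :=
  let p := EVar 0 in let q := EVar 1 in
  EApp2 emul (EApp2 eadd p q) (EApp2 eadd q (EApp2 emul (enat 4) p)).

Definition esearch_bound :=
  let p := EVar 0 in let q := EVar 1 in
  let len := EApp2 eadd (EApp2 eadd (EApp2 eadd (EApp2 estate_count p q)
               (EApp2 estate_count q p)) p) q in
  EApp1 epow2 (EApp2 eadd len len).

Lemma denote_search_bound p q : denote esearch_bound [:: p; q] = search_bound p q.
Proof. by rewrite /= !(denote_add, denote_mul, denote_enat) denote_pow2 addnn. Qed.
Opaque esearch_bound.

Definition eantipal_ratio :=
  let solution_AB :=
    let B := EVar 0 in let A := EVar 2 in let p := EVar 4 in let q := EVar 5 in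
    eand (eand (EApp1 eantipalindromic A) (EApp1 eantipalindromic B))
         (EApp2 eeq (EApp2 emul p B) (EApp2 emul q A)) in
  let solution_A := let p := EVar 2 in let q := EVar 3 in
    eexists solution_AB (EApp2 esearch_bound p q) in
  let p := EVar 0 in let q := EVar 1 in
  eexists solution_A (EApp2 esearch_bound p q).

Lemma denote_antipal_ratio p q : denote eantipal_ratio [:: p; q] =
  [exists A : 'I_(search_bound p q), exists B : 'I_(search_bound p q),
     [&& antipalindromicb A, antipalindromicb B & p * B == q * A]].
Proof.
rewrite (@denote_eexists (fun A => [exists B : 'I_(search_bound p q),
     [&& antipalindromicb A, antipalindromicb B & p * B == q * A]])) /= ?denote_search_bound //.
move=> A r; rewrite (@denote_eexists (fun B =>
     [&& antipalindromicb A, antipalindromicb B & p * B == q * A])) /= ?denote_search_bound //.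
by move=> B r'; rewrite /= !denote_mul !denote_antipalindromic denote_eq !mulnb andbA.
Qed.

Theorem theorem23 :
  exists P : rec, forall p q : nat, 1 <= p -> 1 <= q ->
    (exists b, b <= 1 /\ eval P [:: p; q] b) /\
    (eval P [:: p; q] 1 <->
       exists A B : nat, antipalindromic A /\ antipalindromic B /\ p * B = q * A).
Proof.
exists (compile 2 eantipal_ratio) => p q p_gt0 q_gt0.
have decide := compile_computes eantipal_ratio [:: p; q].
split.
  exists (denote eantipal_ratio [:: p; q]); split; last exact/decide.
  by rewrite denote_antipal_ratio leq_b1.
apply: iff_trans (decide 1) _; rewrite denote_antipal_ratio.
by case: (antipal_ratio_searchP p_gt0 q_gt0).
Qed.
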